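(* The equation $Pu=0$ has a nonconstant radial solution $u=u(r)$ (on some interval $0<r<R$) if and only if \[ \beta(t)=\frac{\lambda}{a}p(t)-ik_1 \] for some $k_1\in\mathbb{Z}$ and some real-valued $2\pi$-periodic $p$ with $\int_0^{2\pi}p(t)dt=0$. In this case the radial solutions are exactly $u(r)=C_1\log r+C_2$ if $k_1=0$ and $u(r)=C_1r^{2ak_1}+C_2$ if $k_1\neq0$ ($C_1,C_2$ arbitrary real constants); with $B(t)=e^{ik_1t}\exp\big(\frac{\bar\lambda}{a}\int_0^tp(s)ds\big)$, the corresponding $L$-potentials are $w=iC_1B(t)$ when $k_1=0$ and $w=2iak_1C_1r^{2ak_1}B(t)$ when $k_1\ne0$, and (for $C_1\neq 0$) $w$ is a basic solution of $\mathcal{L}$ with character $(2ak_1,k_1)$.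
   Context: Fix $a>0$, $b\in\mathbb{R}$, $\lambda=a+ib$, and on $(0,\infty)\times\mathbb{S}^1$ (coordinates $(r,t)$) let $L=\lambda\partial_t-ir\partial_r$, $\bar L=\bar\lambda\partial_t+ir\partial_r$. Let $\beta\in C^m(\mathbb{S}^1,\mathbb{C})$, $m\ge2$, with $\frac{1}{2\pi i}\int_0^{2\pi}\beta(t)dt\in\mathbb{Z}$. Define $P=L\bar L+\bar\lambda\beta(t)L+\lambda\overline{\beta(t)}\bar L$, $B(t)=\exp\int_0^t\overline{\beta(s)}ds$, $c(t)=-\bar\lambda\beta(t)B(t)/\overline{B(t)}$, $\mathcal{L}w=Lw-c(t)\bar w$. The $L$-potential of a real function $u$ is $w=B\bar Lu$. A basic solution of $\mathcal{L}$ is a nontrivial solution of $\mathcal{L}w=0$ on $(0,\infty)\times\mathbb{S}^1$ of the form $r^\sigma\phi(t)+\overline{r^\sigma\psi(t)}$ ($\phi,\psi$ $2\pi$-periodic), written with $|\phi|>|\psi|$ if $\sigma\notin\mathbb{R}$ and as $r^\sigma f$ ($f$ nowhere zero) if $\sigma\in\mathbb{R}$; its character is $(\sigma,\text{winding number of }\phi\text{ (resp. }f))$. *)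

From Stdlib Require Import Reals ZArith ClassicalEpsilon.
Open Scope R_scope.

Definition Cplx : Type := (R * R)%type.
Definition Re (z : Cplx) : R := fst z.
Definition Im (z : Cplx) : R := snd z.
Definition RtoC (x : R) : Cplx := (x, 0).
Definition Ci : Cplx := (0, 1).
Definition Cadd (z w : Cplx) : Cplx := (Re z + Re w, Im z + Im w).
Definition Copp (z : Cplx) : Cplx := (- Re z, - Im z).
Definition Csub (z w : Cplx) : Cplx := Cadd z (Copp w).
Definition Cmul (z w : Cplx) : Cplx :=
  (Re z * Re w - Im z * Im w, Re z * Im w + Im z * Re w).
Definition Cconj (z : Cplx) : Cplx := (Re z, - Im z).
Definition Cinv (z : Cplx) : Cplx :=
  (Re z / (Re z ^ 2 + Im z ^ 2), - Im z / (Re z ^ 2 + Im z ^ 2)).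
Definition Cdiv (z w : Cplx) : Cplx := Cmul z (Cinv w).
Definition Cnorm (z : Cplx) : R := sqrt (Re z ^ 2 + Im z ^ 2).
Definition Cexp (z : Cplx) : Cplx := (exp (Re z) * cos (Im z), exp (Re z) * sin (Im z)).
Definition Cpow (r : R) (s : Cplx) : Cplx := Cexp (Cmul s (RtoC (ln r))).

(** total Riemann integral (oriented); 0 when not Riemann integrable *)
Definition Rint (f : R -> R) (a b : R) : R :=
  match excluded_middle_informative (inhabited (Riemann_integrable f a b)) with
  | left H => RiemannInt (epsilon H (fun _ => True))
  | right _ => 0
  end.
Definition Cint (f : R -> Cplx) (a b : R) : Cplx :=
  (Rint (fun x => Re (f x)) a b, Rint (fun x => Im (f x)) a b).

Definition Cderiv (f : R -> Cplx) (x : R) (l : Cplx) : Prop :=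
  derivable_pt_lim (fun y => Re (f y)) x (Re l) /\
  derivable_pt_lim (fun y => Im (f y)) x (Im l).

Definition Ccontinuous (f : R -> Cplx) : Prop :=
  continuity (fun y => Re (f y)) /\ continuity (fun y => Im (f y)).

Fixpoint CnR (n : nat) (f : R -> R) : Prop :=
  match n with
  | O => continuity f
  | S n' => exists f' : R -> R,
      (forall x, derivable_pt_lim f x (f' x)) /\ CnR n' f'
  end.
Definition CnC (n : nat) (f : R -> Cplx) : Prop :=
  CnR n (fun y => Re (f y)) /\ CnR n (fun y => Im (f y)).

Definition periodic2pi {A : Type} (f : R -> A) : Prop :=
  forall t, f (t + 2 * PI) = f t.

Definition is_integerC (z : Cplx) : Prop := exists n : Z, z = RtoC (IZR n).

Definition lam (a b : R) : Cplx := (a, b).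

Definition Bfun (beta : R -> Cplx) (t : R) : Cplx :=
  Cexp (Cint (fun s => Cconj (beta s)) 0 t).

Definition cfun (a b : R) (beta : R -> Cplx) (t : R) : Cplx :=
  Copp (Cdiv (Cmul (Cmul (Cconj (lam a b)) (beta t)) (Bfun beta t))
             (Cconj (Bfun beta t))).

(** u : (r,t) -> R is a (classical) solution of P u = 0 on (0,Rr) x R, where
    P u = L (Lbar u) + conj(lambda) beta L u + lambda conj(beta) Lbar u,
    L = lambda d_t - i r d_r, Lbar = conj(lambda) d_t + i r d_r. *)
Definition Psol (a b : R) (beta : R -> Cplx) (Rr : R) (u : R -> R -> R) : Prop :=
  exists ur ut : R -> R -> R,
    (forall r t, 0 < r < Rr ->
       derivable_pt_lim (fun s => u s t) r (ur r t) /\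
       derivable_pt_lim (fun s => u r s) t (ut r t)) /\
    let Lu := fun r t => Csub (Cmul (lam a b) (RtoC (ut r t)))
                              (Cmul Ci (RtoC (r * ur r t))) in
    let Lbu := fun r t => Cadd (Cmul (Cconj (lam a b)) (RtoC (ut r t)))
                               (Cmul Ci (RtoC (r * ur r t))) in
    exists vr vt : R -> R -> Cplx,
      forall r t, 0 < r < Rr ->
        Cderiv (fun s => Lbu s t) r (vr r t) /\
        Cderiv (fun s => Lbu r s) t (vt r t) /\
        Cadd (Cadd (Csub (Cmul (lam a b) (vt r t)) (Cmul Ci (Cmul (RtoC r) (vr r t))))
                   (Cmul (Cmul (Cconj (lam a b)) (beta t)) (Lu r t)))
             (Cmul (Cmul (lam a b) (Cconj (beta t))) (Lbu r t)) = RtoC 0.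

Definition radial_sol (a b : R) (beta : R -> Cplx) (Rr : R) (f : R -> R) : Prop :=
  Psol a b beta Rr (fun r _ => f r).

Definition Lpotential (a b : R) (beta : R -> Cplx) (Rr : R)
    (u : R -> R -> R) (w : R -> R -> Cplx) : Prop :=
  forall r t, 0 < r < Rr ->
    exists ur ut : R,
      derivable_pt_lim (fun s => u s t) r ur /\
      derivable_pt_lim (fun s => u r s) t ut /\
      w r t = Cmul (Bfun beta t)
                   (Cadd (Cmul (Cconj (lam a b)) (RtoC ut)) (Cmul Ci (RtoC (r * ur)))).

Definition calLsol (a b : R) (beta : R -> Cplx) (w : R -> R -> Cplx) : Prop :=
  forall r t, 0 < r ->
    exists wr wt : Cplx,
      Cderiv (fun s => w s t) r wr /\
      Cderiv (fun s => w r s) t wt /\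
      Csub (Csub (Cmul (lam a b) wt) (Cmul Ci (Cmul (RtoC r) wr)))
           (Cmul (cfun a b beta t) (Cconj (w r t))) = RtoC 0.

Definition winding (f : R -> Cplx) (k : Z) : Prop :=
  Ccontinuous f /\ (forall t, f t <> RtoC 0) /\
  exists theta : R -> R, continuity theta /\
    (forall t, f t = Cmul (RtoC (Cnorm (f t))) (Cexp (0, theta t))) /\
    theta (2 * PI) - theta 0 = 2 * PI * IZR k.

Definition basic_solution_char (a b : R) (beta : R -> Cplx) (w : R -> R -> Cplx)
    (sigma : Cplx) (k : Z) : Prop :=
  calLsol a b beta w /\
  (exists r t, 0 < r /\ w r t <> RtoC 0) /\
  ( (Im sigma = 0 /\
      exists f : R -> Cplx, periodic2pi f /\ winding f k /\
        forall r t, 0 < r -> w r t = Cmul (RtoC (Rpower r (Re sigma))) (f t))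
    \/
    (Im sigma <> 0 /\
      exists phi psi : R -> Cplx, periodic2pi phi /\ periodic2pi psi /\
        Ccontinuous psi /\ (forall t, Cnorm (psi t) < Cnorm (phi t)) /\
        winding phi k /\
        forall r t, 0 < r ->
          w r t = Cadd (Cmul (Cpow r sigma) (phi t)) (Cconj (Cmul (Cpow r sigma) (psi t))))).

(** For radial [u = f(r)] one has [L u = - i r f'] and [Lbar u = i r f'], so
    [P u = 0] is the ODE [r (r f')' = 2 (r f') kappa(t)] with
    [kappa = b Re beta - a Im beta].  The proof has three parts.

    A nonconstant solution has [f' <> 0] somewhere, which forces
      [kappa] to be constant; integrating [a Im beta = b Re beta - kappa] over a
      period and using that [(1/2 pi i) int beta] is an integer gives
      [int Re beta = 0] and [kappa = a k1] with [k1 : Z], i.e. the normal form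
      [beta = (lambda / a) p - i k1] with [p = Re beta].  With [kappa = a k1], [r f'] solves the Euler equation
      [r G' = 2 a k1 G], so [r f' = K r^(2 a k1)] and [f] is [C1 log r + C2]
      ([k1 = 0]) or [C1 r^(2 a k1) + C2].
    - Potentials.  [B = exp(Bphase)] with [Bphase t = i k1 t + (conj lambda / a) int_0^t p]
      (both exponents are primitives of [conj beta]); [w = i G(r) B(t)] with [G = r f']
      solves [L w = c conj w], and is [r^(2 a k1)] times a periodic curve of winding
      number [k1]. *)

From Stdlib Require Import Reals ZArith Lra Psatz FunctionalExtensionality ClassicalEpsilon.
Open Scope R_scope.

(** Pointwise forms of the library differentiation rules, phrased with
    lambda-terms so that [apply] unifies them directly with goals. *)

Lemma D_ext f g x l : (forall y, f y = g y) -> derivable_pt_lim f x l -> derivable_pt_lim g x l.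
Proof. intros H; replace g with f; auto. apply functional_extensionality; auto. Qed.

Lemma D_eqv f x l l' : l = l' -> derivable_pt_lim f x l -> derivable_pt_lim f x l'.
Proof. intros ->; auto. Qed.

Lemma D_const c x : derivable_pt_lim (fun _ => c) x 0.
Proof. apply (derivable_pt_lim_const c). Qed.

Lemma D_id x : derivable_pt_lim (fun y => y) x 1.
Proof. apply derivable_pt_lim_id. Qed.

Lemma D_plus f g x lf lg : derivable_pt_lim f x lf -> derivable_pt_lim g x lg ->
  derivable_pt_lim (fun y => f y + g y) x (lf + lg).
Proof. intros; apply (derivable_pt_lim_plus f g); auto. Qed.

Lemma D_minus f g x lf lg : derivable_pt_lim f x lf -> derivable_pt_lim g x lg ->
  derivable_pt_lim (fun y => f y - g y) x (lf - lg).
Proof. intros; apply (derivable_pt_lim_minus f g); auto. Qed.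

Lemma D_mult f g x lf lg : derivable_pt_lim f x lf -> derivable_pt_lim g x lg ->
  derivable_pt_lim (fun y => f y * g y) x (lf * g x + f x * lg).
Proof. intros; apply (derivable_pt_lim_mult f g); auto. Qed.

Lemma D_scal c f x l : derivable_pt_lim f x l -> derivable_pt_lim (fun y => c * f y) x (c * l).
Proof.
  intros H. apply (D_eqv _ _ (0 * f x + c * l)); [ring|].
  apply (D_mult (fun _ => c) f); auto using D_const.
Qed.

Lemma D_comp f g x l l' : derivable_pt_lim f x l -> derivable_pt_lim g (f x) l' ->
  derivable_pt_lim (fun y => g (f y)) x (l' * l).
Proof. intros; apply (derivable_pt_lim_comp f g); auto. Qed.

Lemma D_exp f x l : derivable_pt_lim f x l ->
  derivable_pt_lim (fun y => exp (f y)) x (exp (f x) * l).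
Proof. intros; apply D_comp; auto using derivable_pt_lim_exp. Qed.

Lemma D_cos f x l : derivable_pt_lim f x l ->
  derivable_pt_lim (fun y => cos (f y)) x (- sin (f x) * l).
Proof. intros; apply D_comp; auto using derivable_pt_lim_cos. Qed.

Lemma D_sin f x l : derivable_pt_lim f x l ->
  derivable_pt_lim (fun y => sin (f y)) x (cos (f x) * l).
Proof. intros; apply D_comp; auto using derivable_pt_lim_sin. Qed.

Lemma D_unique f x l1 l2 : derivable_pt_lim f x l1 -> derivable_pt_lim f x l2 -> l1 = l2.
Proof. apply uniqueness_limite. Qed.

Lemma D_local f g lo hi x l : lo < x < hi -> (forall y, lo < y < hi -> f y = g y) ->
  derivable_pt_lim f x l -> derivable_pt_lim g x l.
Proof.
  intros Hx Hfg Hd eps Heps. destruct (Hd eps Heps) as [d Hd'].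
  assert (Hpos : 0 < Rmin d (Rmin (x - lo) (hi - x))).
  { destruct d; simpl. repeat apply Rmin_pos; lra. }
  exists (mkposreal _ Hpos). intros h Hh0 Hh. simpl in Hh.
  pose proof (Rmin_l d (Rmin (x - lo) (hi - x))).
  pose proof (Rmin_r d (Rmin (x - lo) (hi - x))).
  pose proof (Rmin_l (x - lo) (hi - x)). pose proof (Rmin_r (x - lo) (hi - x)).
  apply Rabs_def2 in Hh.
  rewrite <- (Hfg x), <- (Hfg (x + h)) by lra. apply Hd'; auto; apply Rabs_def1; lra.
Qed.

Lemma continuity_of_deriv f f' : (forall x, derivable_pt_lim f x (f' x)) -> continuity f.
Proof. intros H x. apply derivable_continuous_pt. exists (f' x). apply H. Qed.

Lemma const_interval h h' lo hi : (forall r, lo < r < hi -> derivable_pt_lim h r (h' r)) ->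
  (forall r, lo < r < hi -> h' r = 0) ->
  forall r1 r2, lo < r1 < hi -> lo < r2 < hi -> h r1 = h r2.
Proof.
  intros Hd H0.
  assert (Hle : forall r1 r2, lo < r1 < hi -> lo < r2 < hi -> r1 < r2 -> h r1 = h r2).
  { intros r1 r2 H1 H2 Hl.
    destruct (MVT_cor2 h h' r1 r2 Hl) as [c [Hc Hc']]; [intros c Hc; apply Hd; lra|].
    rewrite H0 in Hc by lra. lra. }
  intros r1 r2 H1 H2. destruct (Rtotal_order r1 r2) as [Hl|[->|Hg]]; auto.
  symmetry; auto.
Qed.

Lemma same_deriv F G f : (forall t, derivable_pt_lim F t (f t)) ->
  (forall t, derivable_pt_lim G t (f t)) -> F 0 = G 0 -> forall t, F t = G t.
Proof.
  intros HF HG H0 t.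
  assert (E : F t - G t = F 0 - G 0).
  { apply (const_interval (fun t => F t - G t) (fun t => f t - f t)
             (Rmin t 0 - 1) (Rmax t 0 + 1)).
    - intros r _; apply D_minus; auto.
    - intros; ring.
    - unfold Rmin, Rmax; destruct Rle_dec; lra.
    - unfold Rmin, Rmax; destruct Rle_dec; lra. }
  lra.
Qed.

Lemma Rint_RiemannInt f a b (pr : Riemann_integrable f a b) : Rint f a b = RiemannInt pr.
Proof.
  unfold Rint. destruct excluded_middle_informative as [H|H].
  - apply RiemannInt_P5.
  - exfalso; apply H; constructor; exact pr.
Qed.

Lemma Rint_0 f : Rint f 0 0 = 0.
Proof. rewrite (Rint_RiemannInt f 0 0 (RiemannInt_P7 f 0)). apply RiemannInt_P9. Qed.

Lemma continuity_Riemann_integrable f : continuity f -> forall a b, Riemann_integrable f a b.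
Proof.
  intros Hc a b. destruct (Rle_dec a b).
  - apply continuity_implies_RiemannInt; auto.
  - apply RiemannInt_P1, continuity_implies_RiemannInt; [lra|auto].
Qed.

Lemma Rint_deriv f : continuity f -> forall t, derivable_pt_lim (fun t => Rint f 0 t) t (f t).
Proof.
  intros Hc t. set (M := Rabs t + 1).
  assert (h : -M <= M) by (unfold M; pose proof (Rabs_pos t); lra).
  assert (C0 : forall x, -M <= x <= M -> continuity_pt f x) by (intros; apply Hc).
  assert (Hin : -M < t < M).
  { unfold M; pose proof (Rle_abs t); pose proof (Rle_abs (- t)); rewrite Rabs_Ropp in *; lra. }
  pose proof (@RiemannInt_P27 f (-M) M t h C0 Hin) as HD.
  set (I := continuity_Riemann_integrable f Hc).
  apply (D_local (fun x => primitive h (FTC_P1 h C0) x - RiemannInt (I (-M) 0)) _ (-M) M); auto.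
  - intros y Hy. unfold primitive. do 2 (destruct Rle_dec; [|lra]).
    rewrite (Rint_RiemannInt f 0 y (I 0 y)),
      <- (RiemannInt_P26 (I (-M) 0) (I 0 y) (FTC_P1 h C0 r r0)). ring.
  - apply (D_eqv _ _ (f t - 0)); [ring|]. apply D_minus; auto using D_const.
Qed.

Lemma Rint_periodic p : continuity p -> periodic2pi p -> Rint p 0 (2 * PI) = 0 ->
  forall t, Rint p 0 (t + 2 * PI) = Rint p 0 t.
Proof.
  intros Hc Hp H0. apply (same_deriv _ _ p).
  - intros t. apply (D_eqv _ _ (p (t + 2 * PI) * (1 + 0))); [rewrite Hp; ring|].
    apply (D_comp (fun t => t + 2 * PI) (fun x => Rint p 0 x)).
    + apply D_plus; auto using D_id, D_const.
    + apply Rint_deriv; auto.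
  - apply Rint_deriv; auto.
  - rewrite Rplus_0_l, H0, Rint_0; auto.
Qed.

Lemma Cmul_comm z w : Cmul z w = Cmul w z.
Proof. destruct z, w; unfold Cmul; simpl; f_equal; ring. Qed.

Lemma Cexp_add u v : Cexp (Cadd u v) = Cmul (Cexp u) (Cexp v).
Proof.
  destruct u as [x y], v as [x' y']; unfold Cexp, Cadd, Cmul, Re, Im; simpl.
  rewrite exp_plus, cos_plus, sin_plus. f_equal; ring.
Qed.

Lemma Cderiv_eqv F x l l' : l = l' -> Cderiv F x l -> Cderiv F x l'.
Proof. intros ->; auto. Qed.

Lemma Cderiv_pair f g x lf lg : derivable_pt_lim f x lf -> derivable_pt_lim g x lg ->
  Cderiv (fun s => (f s, g s)) x (lf, lg).
Proof. intros; split; simpl; auto. Qed.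

Lemma Cderiv_RtoC f x l : derivable_pt_lim f x l -> Cderiv (fun s => RtoC (f s)) x (RtoC l).
Proof. intros; apply Cderiv_pair; auto using D_const. Qed.

Lemma Cderiv_add F G x lf lg : Cderiv F x lf -> Cderiv G x lg ->
  Cderiv (fun s => Cadd (F s) (G s)) x (Cadd lf lg).
Proof. intros [H1 H2] [H3 H4]; split; unfold Cadd; simpl; apply D_plus; auto. Qed.

Lemma Cderiv_mull z F x l : Cderiv F x l -> Cderiv (fun s => Cmul z (F s)) x (Cmul z l).
Proof.
  intros [H1 H2]; destruct z as [zr zi]; split; unfold Cmul, Re, Im in *; simpl in *.
  - apply D_minus; apply D_scal; auto.
  - apply D_plus; apply D_scal; auto.
Qed.

Lemma Cderiv_mulr z F x l : Cderiv F x l -> Cderiv (fun s => Cmul (F s) z) x (Cmul l z).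
Proof.
  intros H. rewrite Cmul_comm.
  replace (fun s => Cmul (F s) z) with (fun s => Cmul z (F s))
    by (apply functional_extensionality; intros; apply Cmul_comm).
  apply Cderiv_mull; auto.
Qed.

Lemma Cderiv_exp F x l : Cderiv F x l -> Cderiv (fun s => Cexp (F s)) x (Cmul l (Cexp (F x))).
Proof.
  intros [H1 H2]. unfold Cexp, Cmul, Re, Im in *; split; simpl.
  - eapply D_eqv; [|apply D_mult; [apply D_exp; eauto | apply D_cos; eauto]]. simpl; ring.
  - eapply D_eqv; [|apply D_mult; [apply D_exp; eauto | apply D_sin; eauto]]. simpl; ring.
Qed.

Lemma Ccontinuous_of_Cderiv F F' : (forall t, Cderiv F t (F' t)) -> Ccontinuous F.
Proof.
  intros H. split.
  - apply (continuity_of_deriv _ (fun t => Re (F' t))). intros x; apply (H x).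
  - apply (continuity_of_deriv _ (fun t => Im (F' t))). intros x; apply (H x).
Qed.

Lemma Cexp_sqnorm_pos z : 0 < Re (Cexp z) ^ 2 + Im (Cexp z) ^ 2.
Proof.
  destruct z as [x y]. unfold Cexp, Re, Im; cbn [fst snd].
  replace ((exp x * cos y) ^ 2 + (exp x * sin y) ^ 2)
    with (exp x ^ 2 * (Rsqr (sin y) + Rsqr (cos y))) by (unfold Rsqr; ring).
  rewrite sin2_cos2. pose proof (exp_pos x). nra.
Qed.

Lemma Cnorm_eq u v N : u ^ 2 + v ^ 2 = N ^ 2 -> 0 <= N -> Cnorm (u, v) = N.
Proof. intros H HN. unfold Cnorm, Re, Im; cbn [fst snd]. rewrite H. apply sqrt_pow2; auto. Qed.

Lemma Cnorm_0 : Cnorm (RtoC 0) = 0.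
Proof.
  unfold Cnorm, RtoC, Re, Im; cbn [fst snd].
  replace (0 ^ 2 + 0 ^ 2) with 0 by ring. apply sqrt_0.
Qed.

Lemma cos_sin_period_Z x (k : Z) :
  cos (x + 2 * IZR k * PI) = cos x /\ sin (x + 2 * IZR k * PI) = sin x.
Proof.
  assert (Hnat : forall q, IZR (Zpos q) = INR (Pos.to_nat q))
    by (intros; rewrite INR_IZR_INZ, positive_nat_Z; auto).
  destruct k as [|q|q].
  - replace (x + 2 * IZR 0 * PI) with x by (simpl; ring). auto.
  - rewrite (Hnat q). split; [apply cos_period | apply sin_period].
  - rewrite IZR_NEG, (Hnat q).
    set (y := x + 2 * - INR (Pos.to_nat q) * PI).
    assert (Ex : x = y + 2 * INR (Pos.to_nat q) * PI) by (unfold y; ring).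
    clearbody y. rewrite Ex, cos_period, sin_period; auto.
Qed.

(** For radial [u = f(r)] one has [L u = - i r f'] and [Lbar u = i r f'], so
    [P u = 0] reduces to [r (r f')' = 2 (r f') kappa(t)], where
    [kappa = b Re beta - a Im beta = - Im (conj lambda * beta)]. *)
Definition kappa (a b : R) (beta : R -> Cplx) (t : R) : R := b * Re (beta t) - a * Im (beta t).

Definition radial_ode (a b : R) (beta : R -> Cplx) (Rr : R) (f : R -> R) : Prop :=
  exists F' G' : R -> R,
    (forall r, 0 < r < Rr -> derivable_pt_lim f r (F' r)) /\
    (forall r, 0 < r < Rr -> derivable_pt_lim (fun s => s * F' s) r (G' r)) /\
    (forall r t, 0 < r < Rr -> r * G' r = 2 * (r * F' r) * kappa a b beta t).

Lemma radial_sol_ode a b beta Rr f : radial_sol a b beta Rr f -> radial_ode a b beta Rr f.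
Proof.
  unfold radial_sol, Psol. intros [ur [ut [Hd Hrest]]]. cbv zeta in Hrest.
  destruct Hrest as [vr [vt Hv]].
  assert (ut0 : forall r t, 0 < r < Rr -> ut r t = 0).
  { intros r t H. apply (D_unique (fun s => f r) t); [apply (Hd r t H) | apply D_const]. }
  assert (urc : forall r t, 0 < r < Rr -> ur r t = ur r 0).
  { intros r t H. apply (D_unique (fun s => f s) r); [apply (Hd r t H) | apply (Hd r 0 H)]. }
  set (F' := fun r => ur r 0). set (G' := fun r => Im (vr r 0)).
  (* [Lbar u = i r f'], so its [r]-derivative has imaginary part [(r f')'] *)
  assert (HG : forall r t, 0 < r < Rr ->
                 derivable_pt_lim (fun s => s * F' s) r (Im (vr r t))).
  { intros r t H. destruct (Hv r t H) as [[_ H2] _].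
    eapply (D_local _ _ 0 Rr r _ H); [|exact H2].
    intros y Hy. unfold Re, Im, Cadd, Cmul, Cconj, Ci, RtoC, lam, F'; simpl.
    rewrite ut0, urc by auto. ring. }
  assert (HG' : forall r t, 0 < r < Rr -> Im (vr r t) = G' r).
  { intros r t H. apply (D_unique (fun s => s * F' s) r); apply HG; auto. }
  exists F', G'. split; [|split].
  - intros r H. apply (Hd r 0 H).
  - intros r H. apply HG; auto.
  - intros r t H. destruct (Hv r t H) as [_ [[Hv1 Hv2] E]].
    (* [Lbar u] is constant in [t], so [vt = 0] *)
    assert (Z0 : Re (vt r t) = 0).
    { eapply D_unique; [exact Hv1|]. apply (D_ext (fun _ => 0)); [|apply D_const].
      intros y. unfold Re, Im, Cadd, Cmul, Cconj, Ci, RtoC, lam; simpl.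
      rewrite ut0 by auto. ring. }
    assert (W0 : Im (vt r t) = 0).
    { eapply D_unique; [exact Hv2|]. apply (D_ext (fun _ => r * F' r)); [|apply D_const].
      intros y. unfold Re, Im, Cadd, Cmul, Cconj, Ci, RtoC, lam, F'; simpl.
      rewrite ut0, (urc r y) by auto. ring. }
    rewrite <- (HG' r t H).
    apply (f_equal fst) in E. rewrite (ut0 r t H), (urc r t H) in E. fold (F' r) in E.
    unfold kappa, Re, Im in Z0, W0 |- *.
    destruct (vt r t) as [Z W]; destruct (vr r t) as [X Y]; destruct (beta t) as [x y].
    simpl in Z0, W0 |- *. subst Z W.
    unfold Re, Im, Cadd, Csub, Cmul, Copp, Cconj, Ci, RtoC, lam in E; simpl in E.
    lra.
Qed.

Lemma radial_ode_sol a b beta Rr f : radial_ode a b beta Rr f -> radial_sol a b beta Rr f.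
Proof.
  intros [F' [G' [HF [HG E]]]]. unfold radial_sol, Psol.
  exists (fun r _ => F' r), (fun _ _ => 0). split.
  { intros r t H. split; [apply HF; auto | apply D_const]. }
  cbv zeta. exists (fun r _ => (0, G' r)), (fun _ _ => (0, 0)).
  intros r t H.
  assert (Hlbu : forall s y, Cadd (Cmul (Cconj (lam a b)) (RtoC 0)) (Cmul Ci (RtoC (s * F' y)))
                             = (0, s * F' y)).
  { intros; unfold Cadd, Cmul, Cconj, Ci, RtoC, lam, Re, Im; simpl; f_equal; ring. }
  split; [|split].
  - apply Cderiv_eqv with (0, G' r); [reflexivity|].
    replace (fun s => _) with (fun s => (0, s * F' s))
      by (apply functional_extensionality; intros; rewrite Hlbu; reflexivity).
    apply Cderiv_pair; [apply D_const | apply HG; auto].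
  - replace (fun s => _) with (fun _ : R => (0, r * F' r))
      by (apply functional_extensionality; intros; rewrite Hlbu; reflexivity).
    apply Cderiv_pair; apply D_const.
  - specialize (E r t H). unfold kappa, Re, Im in E. destruct (beta t) as [x y]; simpl in E.
    unfold Re, Im, Cadd, Csub, Cmul, Copp, Cconj, Ci, RtoC, lam; simpl. f_equal; lra.
Qed.

Definition beta_form (a b : R) (k1 : Z) (p : R -> R) (beta : R -> Cplx) : Prop :=
  forall t, beta t = Csub (Cmul (Cmul (lam a b) (RtoC (/ a))) (RtoC (p t)))
                          (Cmul Ci (RtoC (IZR k1))).

Lemma beta_form_Re a b k1 p beta : 0 < a -> beta_form a b k1 p beta ->
  forall t, p t = Re (beta t).
Proof.
  intros Ha Hb t; rewrite Hb; unfold Re, Im, Csub, Cadd, Copp, Cmul, Ci, RtoC, lam; simpl.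
  field; lra.
Qed.

Lemma beta_form_kappa a b k1 p beta : 0 < a -> beta_form a b k1 p beta ->
  forall t, kappa a b beta t = a * IZR k1.
Proof.
  intros Ha Hb t; unfold kappa; rewrite Hb.
  unfold Re, Im, Csub, Cadd, Copp, Cmul, Ci, RtoC, lam; simpl. field; lra.
Qed.

Lemma beta_form_continuous a b k1 p beta : 0 < a -> beta_form a b k1 p beta ->
  continuity (fun t => Re (beta t)) -> continuity p.
Proof.
  intros Ha Hb Hc. replace p with (fun t => Re (beta t)); auto.
  apply functional_extensionality; intros; rewrite (beta_form_Re a b k1 p beta); auto.
Qed.

(** If [P u = 0] has a nonconstant radial solution, [kappa] is constant: the
    radial ODE at a point where [f' <> 0] forces [kappa t = kappa 0]. *)
Lemma kappa_constant a b beta Rr f : radial_sol a b beta Rr f ->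
  (exists r1 r2, 0 < r1 < Rr /\ 0 < r2 < Rr /\ f r1 <> f r2) ->
  forall t, kappa a b beta t = kappa a b beta 0.
Proof.
  intros Hs [r1 [r2 [H1 [H2 H12]]]].
  destruct (radial_sol_ode _ _ _ _ _ Hs) as [F' [G' [HF [_ E]]]].
  assert (Hc : exists c, 0 < c < Rr /\ F' c <> 0).
  { apply NNPP; intros Hno. apply H12.
    apply (const_interval f F' 0 Rr); auto.
    intros r Hr. apply NNPP; intros Hne. apply Hno; exists r; auto. }
  destruct Hc as [c [Hc HFc]]. intros t.
  assert (c * F' c <> 0) by (apply Rmult_integral_contrapositive; split; lra).
  apply Rmult_eq_reg_l with (2 * (c * F' c)); [|lra].
  rewrite <- (E c t Hc), <- (E c 0 Hc); reflexivity.
Qed.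

(** Conversely a continuous periodic [beta] with constant [kappa] and integral
    [(1/2 pi i) int beta] in [Z] is in normal form, with [p = Re beta]: the
    integrality condition gives [int Re beta = 0] and [kappa = a k1]. *)
Lemma beta_form_of_constant_kappa a b beta : 0 < a -> periodic2pi beta ->
  continuity (fun t => Re (beta t)) -> continuity (fun t => Im (beta t)) ->
  is_integerC (Cmul (Cinv (Cmul (RtoC (2 * PI)) Ci)) (Cint beta 0 (2 * PI))) ->
  (forall t, kappa a b beta t = kappa a b beta 0) ->
  exists (k1 : Z) (p : R -> R), periodic2pi p /\ Rint p 0 (2 * PI) = 0 /\
    beta_form a b k1 p beta.
Proof.
  intros Ha Hper Hre Him [n Hn] Hk. set (kap := kappa a b beta 0) in Hk.
  set (X := Rint (fun t => Re (beta t)) 0 (2 * PI)).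
  set (Y := Rint (fun t => Im (beta t)) 0 (2 * PI)).
  (* integrating [a Im beta = b Re beta - kap] over a period *)
  assert (HY : Y = (b * X - kap * (2 * PI)) / a).
  { unfold X, Y.
    apply (same_deriv (fun t => Rint (fun t => Im (beta t)) 0 t)
        (fun t => (b * Rint (fun t => Re (beta t)) 0 t - kap * t) * / a) (fun t => Im (beta t))).
    - apply Rint_deriv; auto.
    - intros t. apply (D_eqv _ _ ((b * Re (beta t) - kap * 1) * / a
                                  + (b * Rint (fun t => Re (beta t)) 0 t - kap * t) * 0)).
      + rewrite <- (Hk t). unfold kappa. field; lra.
      + apply (D_mult (fun t => b * Rint (fun t => Re (beta t)) 0 t - kap * t) (fun _ => / a));
          [|apply D_const].
        apply D_minus; [apply D_scal, Rint_deriv; auto | apply D_scal, D_id].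
    - rewrite !Rint_0. field; lra. }
  change (Cint beta 0 (2 * PI)) with (X, Y) in Hn.
  pose proof PI_RGT_0 as HPI.
  assert (Hinv : Cinv (Cmul (RtoC (2 * PI)) Ci) = (0, - / (2 * PI))).
  { unfold Cinv, Cmul, RtoC, Ci, Re, Im; simpl. f_equal; field; lra. }
  rewrite Hinv in Hn. unfold Cmul, RtoC, Re, Im in Hn; simpl in Hn.
  injection Hn; intros Hn2 Hn1.
  assert (HX : X = 0).
  { assert (HXe : X = (0 * Y + - / (2 * PI) * X) * (- (2 * PI))) by (field; lra).
    rewrite Hn2 in HXe; lra. }
  assert (Hkap : kap = - a * IZR n) by (rewrite <- Hn1, HY, HX; field; lra).
  exists (- n)%Z, (fun t => Re (beta t)). split; [|split].
  - intros t; rewrite Hper; auto.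
  - exact HX.
  - intros t. assert (Ht := Hk t). rewrite Hkap in Ht. rewrite opp_IZR.
    unfold kappa, Re, Im in Ht |- *. destruct (beta t) as [x y]; simpl in Ht |- *.
    unfold Csub, Cadd, Copp, Cmul, Ci, RtoC, lam, Re, Im; simpl. f_equal; [field; lra|].
    apply Rmult_eq_reg_l with a; [|lra]. field_simplify; lra.
Qed.

(** Radial profiles [C1 log r + C2] ([k1 = 0]) and [C1 r^s + C2] ([s = 2 a k1]),
    their derivative, and the amplitude [r f'(r)], which is [C1] resp. [s C1 r^s]. *)
Definition radial_profile (k1 : Z) (a C1 C2 r : R) : R :=
  if Z.eq_dec k1 0 then C1 * ln r + C2 else C1 * Rpower r (2 * a * IZR k1) + C2.

Definition radial_profile_deriv (k1 : Z) (a C1 r : R) : R :=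
  if Z.eq_dec k1 0 then C1 * / r
  else C1 * ((2 * a * IZR k1) * Rpower r (2 * a * IZR k1 - 1)).

Definition amplitude (k1 : Z) (a C1 r : R) : R :=
  if Z.eq_dec k1 0 then C1 else 2 * a * IZR k1 * C1 * Rpower r (2 * a * IZR k1).

Definition amplitude_deriv (k1 : Z) (a C1 r : R) : R :=
  if Z.eq_dec k1 0 then 0
  else 2 * a * IZR k1 * C1 * ((2 * a * IZR k1) * Rpower r (2 * a * IZR k1 - 1)).

Lemma Rpower_pred r x : 0 < r -> r * Rpower r (x - 1) = Rpower r x.
Proof.
  intros H. replace x with ((x - 1) + 1) at 2 by ring. rewrite Rpower_plus, Rpower_1; auto; ring.
Qed.

Lemma Rpower_opp_mul r x : 0 < r -> Rpower r (- x) * Rpower r x = 1.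
Proof. intros H. rewrite <- Rpower_plus. replace (- x + x) with 0 by ring. apply Rpower_O; auto. Qed.

Lemma exponent_nonzero a (k1 : Z) : 0 < a -> k1 <> 0%Z -> 2 * a * IZR k1 <> 0.
Proof.
  intros Ha Hk. apply Rmult_integral_contrapositive; split; [lra|]. apply not_0_IZR; auto.
Qed.

Lemma radial_profile_D k1 a C1 C2 r : 0 < r ->
  derivable_pt_lim (radial_profile k1 a C1 C2) r (radial_profile_deriv k1 a C1 r).
Proof.
  intros Hr. unfold radial_profile, radial_profile_deriv. destruct Z.eq_dec.
  - apply (D_eqv _ _ (C1 * / r + 0)); [ring|].
    apply D_plus; [apply D_scal, derivable_pt_lim_ln; auto | apply D_const].
  - apply (D_eqv _ _ (C1 * (2 * a * IZR k1 * Rpower r (2 * a * IZR k1 - 1)) + 0)); [ring|].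
    apply D_plus; [apply D_scal, derivable_pt_lim_power; auto | apply D_const].
Qed.

Lemma amplitude_eq k1 a C1 r : 0 < r -> r * radial_profile_deriv k1 a C1 r = amplitude k1 a C1 r.
Proof.
  intros Hr. unfold amplitude, radial_profile_deriv. destruct Z.eq_dec.
  - field; lra.
  - rewrite <- (Rpower_pred r (2 * a * IZR k1)) by auto. ring.
Qed.

Lemma amplitude_D k1 a C1 r : 0 < r ->
  derivable_pt_lim (amplitude k1 a C1) r (amplitude_deriv k1 a C1 r).
Proof.
  intros Hr. unfold amplitude, amplitude_deriv. destruct Z.eq_dec.
  - apply D_const.
  - apply D_scal, derivable_pt_lim_power; auto.
Qed.

Lemma amplitude_ode k1 a C1 r : 0 < r ->
  r * amplitude_deriv k1 a C1 r = 2 * a * IZR k1 * amplitude k1 a C1 r.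
Proof.
  intros Hr. unfold amplitude, amplitude_deriv. destruct Z.eq_dec.
  - subst; simpl; ring.
  - rewrite <- (Rpower_pred r (2 * a * IZR k1)) by auto. ring.
Qed.

Lemma amplitude_surj a k1 K : 0 < a ->
  exists C1, forall r, 0 < r -> amplitude k1 a C1 r = K * Rpower r (2 * a * IZR k1).
Proof.
  intros Ha. unfold amplitude. destruct (Z.eq_dec k1 0) as [->|Hk].
  - exists K. intros r Hr. replace (2 * a * IZR 0) with 0 by (simpl; ring).
    rewrite Rpower_O by auto. ring.
  - exists (K / (2 * a * IZR k1)). intros r Hr.
    field. split; [apply not_0_IZR; auto | lra].
Qed.

Lemma radial_profile_sol a b k1 p beta Rr f C1 C2 : 0 < a -> beta_form a b k1 p beta ->
  (forall r, 0 < r < Rr -> f r = radial_profile k1 a C1 C2 r) -> radial_sol a b beta Rr f.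
Proof.
  intros Ha Hb Hf. apply radial_ode_sol.
  exists (radial_profile_deriv k1 a C1), (amplitude_deriv k1 a C1). split; [|split].
  - intros r H. apply (D_local (radial_profile k1 a C1 C2) _ 0 Rr); auto.
    + intros y Hy; rewrite Hf; auto.
    + apply radial_profile_D; lra.
  - intros r H. apply (D_local (amplitude k1 a C1) _ 0 (r + 1)); [lra| |apply amplitude_D; lra].
    intros y Hy. rewrite amplitude_eq; auto; lra.
  - intros r t H. rewrite (beta_form_kappa a b k1 p beta Ha Hb), amplitude_ode, amplitude_eq by lra.
    ring.
Qed.

(** Conversely every radial solution is a radial profile: [r f'] solves the
    Euler equation, hence is an amplitude, hence [f] differs from a profile by
    a function with zero derivative. *)
Lemma radial_sol_profile a b k1 p beta Rr f : 0 < a -> beta_form a b k1 p beta -> 0 < Rr ->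
  radial_sol a b beta Rr f ->
  exists C1 C2, forall r, 0 < r < Rr -> f r = radial_profile k1 a C1 C2 r.
Proof.
  intros Ha Hb HR Hs. destruct (radial_sol_ode _ _ _ _ _ Hs) as [F' [G' [HF [HG E]]]].
  set (s := 2 * a * IZR k1).
  assert (HE : forall r, 0 < r < Rr -> r * G' r = s * (r * F' r)).
  { intros r H. rewrite (E r 0 H), (beta_form_kappa a b k1 p beta Ha Hb 0). unfold s; ring. }
  (* [r F'(r) r^(-s)] is constant, equal to some [K] *)
  assert (Hconst : forall r1 r2, 0 < r1 < Rr -> 0 < r2 < Rr ->
     (r1 * F' r1) * Rpower r1 (- s) = (r2 * F' r2) * Rpower r2 (- s)).
  { apply (const_interval (fun r => (r * F' r) * Rpower r (- s))
      (fun r => G' r * Rpower r (- s) + (r * F' r) * (- s * Rpower r (- s - 1)))).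
    - intros r H. apply (D_mult (fun r => r * F' r) (fun r => Rpower r (- s)));
        [apply HG; auto | apply derivable_pt_lim_power; lra].
    - intros r H.
      replace (G' r * Rpower r (- s) + r * F' r * (- s * Rpower r (- s - 1)))
        with ((r * G' r - s * (r * F' r)) * Rpower r (- s - 1))
        by (rewrite <- (Rpower_pred r (- s)) by lra; ring).
      rewrite HE by auto. ring. }
  set (r0 := Rr / 2). assert (Hr0 : 0 < r0 < Rr) by (unfold r0; lra).
  destruct (amplitude_surj a k1 ((r0 * F' r0) * Rpower r0 (- s)) Ha) as [C1 HC1].
  exists C1, (f r0 - radial_profile k1 a C1 0 r0). intros r H.
  assert (Hdiff : f r - radial_profile k1 a C1 0 r = f r0 - radial_profile k1 a C1 0 r0).
  { apply (const_interval (fun r => f r - radial_profile k1 a C1 0 r)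
             (fun r => F' r - radial_profile_deriv k1 a C1 r) 0 Rr); auto.
    - intros y Hy. apply D_minus; [apply HF; auto | apply radial_profile_D; lra].
    - intros y Hy. apply Rmult_eq_reg_l with y; [|lra].
      rewrite Rmult_minus_distr_l, amplitude_eq, HC1 by lra. fold s.
      rewrite <- (Hconst y r0 Hy Hr0), Rmult_assoc, Rpower_opp_mul by lra. ring. }
  unfold radial_profile in *. destruct Z.eq_dec; lra.
Qed.

Lemma radial_profile_nonconstant k1 a : 0 < a ->
  radial_profile k1 a 1 0 (exp (-1)) <> radial_profile k1 a 1 0 (exp (-2)).
Proof.
  intros Ha. unfold radial_profile. destruct Z.eq_dec as [_|Hk].
  - rewrite !ln_exp. lra.
  - unfold Rpower. rewrite !ln_exp. intro E.
    assert (E' : exp (2 * a * IZR k1 * -1) = exp (2 * a * IZR k1 * -2)) by lra.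
    apply exp_inv in E'. pose proof (exponent_nonzero a k1 Ha Hk). lra.
Qed.

(** In normal form, [B = exp(Bphase)] with [Bphase t = i k1 t + (conj lambda / a) int_0^t p],
    since [conj beta = i k1 + (conj lambda / a) p]. *)
Definition Bphase (a b : R) (k1 : Z) (p : R -> R) (t : R) : Cplx :=
  Cadd (0, IZR k1 * t) (Cmul (Cmul (Cconj (lam a b)) (RtoC (/ a))) (RtoC (Rint p 0 t))).

Lemma Bphase_deriv a b k1 p beta : 0 < a -> beta_form a b k1 p beta -> continuity p ->
  forall t, Cderiv (Bphase a b k1 p) t (Cconj (beta t)).
Proof.
  intros Ha Hb Hc t. unfold Bphase.
  apply (Cderiv_eqv _ _ (Cadd (0, IZR k1 * 1) (Cmul (Cmul (Cconj (lam a b)) (RtoC (/ a)))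
                                                    (RtoC (p t))))).
  - rewrite Hb. unfold Cadd, Csub, Copp, Cmul, Cconj, Ci, RtoC, lam, Re, Im; simpl.
    f_equal; ring.
  - apply Cderiv_add.
    + apply Cderiv_pair; [apply D_const | apply D_scal, D_id].
    + apply Cderiv_mull, Cderiv_RtoC, Rint_deriv; auto.
Qed.

(** [B(t) = exp int_0^t conj beta] equals [exp (Bphase t)]: both exponents are
    primitives of [conj beta] vanishing at [0]. *)
Lemma Bfun_Bphase a b k1 p beta : 0 < a -> beta_form a b k1 p beta ->
  continuity (fun t => Re (beta t)) -> continuity (fun t => Im (beta t)) ->
  forall t, Bfun beta t = Cexp (Bphase a b k1 p t).
Proof.
  intros Ha Hb Hre Him t.
  assert (HD := Bphase_deriv _ _ _ _ _ Ha Hb (beta_form_continuous _ _ _ _ _ Ha Hb Hre)).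
  assert (H0 : Bphase a b k1 p 0 = (0, 0)).
  { unfold Bphase, Cadd, Cmul, Cconj, RtoC, lam, Re, Im; simpl. rewrite Rint_0. f_equal; ring. }
  unfold Bfun, Cint. f_equal. rewrite (surjective_pairing (Bphase a b k1 p t)). f_equal.
  - apply (same_deriv _ (fun t => fst (Bphase a b k1 p t)) (fun t => Re (Cconj (beta t)))).
    + apply Rint_deriv. exact Hre.
    + intros s; apply (HD s).
    + rewrite Rint_0, H0. reflexivity.
  - apply (same_deriv _ (fun t => snd (Bphase a b k1 p t)) (fun t => Im (Cconj (beta t)))).
    + apply Rint_deriv. apply (continuity_opp (fun x => Im (beta x))). exact Him.
    + intros s; apply (HD s).
    + rewrite Rint_0, H0. reflexivity.
Qed.

(** [exp (Bphase)] is [2 pi]-periodic, since [p] has zero mean and [k1] is an integer. *)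
Lemma Bphase_periodic a b k1 p : continuity p -> periodic2pi p -> Rint p 0 (2 * PI) = 0 ->
  forall t, Cexp (Bphase a b k1 p (t + 2 * PI)) = Cexp (Bphase a b k1 p t).
Proof.
  intros Hc Hp H0 t. unfold Bphase. rewrite Rint_periodic; auto.
  destruct (Cmul (Cmul (Cconj (lam a b)) (RtoC (/ a))) (RtoC (Rint p 0 t))) as [v w].
  unfold Cexp, Cadd, Re, Im; simpl.
  replace (IZR k1 * (t + 2 * PI) + w) with ((IZR k1 * t + w) + 2 * IZR k1 * PI) by ring.
  destruct (cos_sin_period_Z (IZR k1 * t + w) k1) as [-> ->]. reflexivity.
Qed.

(** The curve [i c exp(Bphase)], [c <> 0], has winding number [k1]: its argument
    is [Im Bphase +- pi/2], which increases by [2 pi k1] over a period because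
    [Im ((conj lambda / a) int_0^(2 pi) p) = 0]. *)
Lemma winding_Bphase a b k1 p beta c : 0 < a -> beta_form a b k1 p beta -> continuity p ->
  Rint p 0 (2 * PI) = 0 -> c <> 0 ->
  winding (fun t => Cmul (Cmul Ci (RtoC c)) (Cexp (Bphase a b k1 p t))) k1.
Proof.
  intros Ha Hb Hc H0 Hc0. assert (HD := Bphase_deriv _ _ _ _ _ Ha Hb Hc).
  set (ph := if Rlt_dec 0 c then PI / 2 else - (PI / 2)).
  set (N := fun t => Rabs c * exp (Re (Bphase a b k1 p t))).
  assert (HN : forall t, 0 < N t).
  { intros t; unfold N. apply Rmult_lt_0_compat; [apply Rabs_pos_lt; auto | apply exp_pos]. }
  assert (Hform : forall t, Cmul (Cmul Ci (RtoC c)) (Cexp (Bphase a b k1 p t)) =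
     Cmul (RtoC (N t)) (Cexp (0, Im (Bphase a b k1 p t) + ph))).
  { intros t. unfold N, ph. destruct (Bphase a b k1 p t) as [X Y].
    unfold Cmul, Cexp, Ci, RtoC, Re, Im; simpl. rewrite exp_0. destruct Rlt_dec.
    - rewrite Rabs_right by lra. rewrite cos_plus, sin_plus, cos_PI2, sin_PI2. f_equal; ring.
    - rewrite Rabs_left by lra. replace (Y + - (PI / 2)) with (Y - PI / 2) by ring.
      rewrite cos_minus, sin_minus, cos_PI2, sin_PI2. f_equal; ring. }
  assert (Hnorm : forall t, Cnorm (Cmul (Cmul Ci (RtoC c)) (Cexp (Bphase a b k1 p t))) = N t).
  { intros t. rewrite Hform.
    assert (Hs := sin2_cos2 (Im (Bphase a b k1 p t) + ph)). unfold Rsqr in Hs.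
    set (q := Im (Bphase a b k1 p t) + ph) in *. pose proof (HN t).
    unfold Cmul, Cexp, RtoC, Re, Im; cbn [fst snd]. rewrite exp_0.
    apply Cnorm_eq; [|lra].
    replace ((N t * (1 * cos q) - 0 * (1 * sin q)) ^ 2 + (N t * (1 * sin q) + 0 * (1 * cos q)) ^ 2)
      with (N t ^ 2 * (sin q * sin q + cos q * cos q)) by ring.
    rewrite Hs; ring. }
  split; [|split].
  - apply (Ccontinuous_of_Cderiv _ (fun t => Cmul (Cmul Ci (RtoC c))
                                      (Cmul (Cconj (beta t)) (Cexp (Bphase a b k1 p t))))).
    intros t. apply Cderiv_mull, Cderiv_exp, HD.
  - intros t E. specialize (Hnorm t). rewrite E, Cnorm_0 in Hnorm. specialize (HN t). lra.
  - exists (fun t => Im (Bphase a b k1 p t) + ph). split; [|split].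
    + apply continuity_plus; [|apply continuity_const; intros ? ?; auto].
      apply (continuity_of_deriv _ (fun t => Im (Cconj (beta t)))). intros x; apply (HD x).
    + intros t. rewrite Hnorm. apply Hform.
    + unfold Bphase, Cadd, Cmul, Cconj, RtoC, lam, Re, Im; simpl. rewrite H0, Rint_0. ring.
Qed.

Definition potential (a b : R) (k1 : Z) (p : R -> R) (C1 r t : R) : Cplx :=
  Cmul (Cmul Ci (RtoC (amplitude k1 a C1 r))) (Cexp (Bphase a b k1 p t)).

(** [w = i G(r) B(t)] solves [L w = c conj w] whenever [r G' = 2 a k1 G]: then
    [L w = (i lambda conj beta + 2 a k1) w] and [c conj w = - i conj lambda beta w]. *)
Lemma calLsol_separated a b k1 p beta G G' : 0 < a -> beta_form a b k1 p beta ->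
  continuity (fun t => Re (beta t)) -> continuity (fun t => Im (beta t)) ->
  (forall r, 0 < r -> derivable_pt_lim G r (G' r)) ->
  (forall r, 0 < r -> r * G' r = 2 * a * IZR k1 * G r) ->
  calLsol a b beta (fun r t => Cmul (Cmul Ci (RtoC (G r))) (Cexp (Bphase a b k1 p t))).
Proof.
  intros Ha Hb Hre Him HG HG' r t Hr.
  assert (HD := Bphase_deriv _ _ _ _ _ Ha Hb (beta_form_continuous _ _ _ _ _ Ha Hb Hre)).
  exists (Cmul (Cmul Ci (RtoC (G' r))) (Cexp (Bphase a b k1 p t))),
         (Cmul (Cmul Ci (RtoC (G r))) (Cmul (Cconj (beta t)) (Cexp (Bphase a b k1 p t)))).
  split; [|split].
  - apply (Cderiv_mulr _ (fun s => Cmul Ci (RtoC (G s)))). apply Cderiv_mull, Cderiv_RtoC, HG; auto.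
  - apply Cderiv_mull, (Cderiv_exp (Bphase a b k1 p)), HD.
  - unfold cfun. rewrite (Bfun_Bphase a b k1 p beta Ha Hb Hre Him t).
    assert (Hnz := Cexp_sqnorm_pos (Bphase a b k1 p t)).
    assert (EG : G' r = 2 * a * IZR k1 * G r / r) by (rewrite <- HG' by auto; field; lra).
    rewrite EG, Hb.
    destruct (Cexp (Bphase a b k1 p t)) as [x y]. unfold Re, Im in Hnz; cbn [fst snd] in Hnz.
    unfold Csub, Cdiv, Cinv, Cadd, Copp, Cmul, Cconj, Ci, RtoC, lam, Re, Im; cbn [fst snd].
    assert (x ^ 2 + (- y) ^ 2 <> 0) by (replace ((- y) ^ 2) with (y ^ 2) by ring; lra).
    simpl. f_equal; field; repeat split; try lra; (intro HH; apply H; rewrite <- HH; ring).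
Qed.

(** [potential] is the [L]-potential [B Lbar u] of the radial profile, as [Lbar u = i r f']. *)
Lemma potential_Lpotential a b k1 p beta Rr C1 C2 : 0 < a -> beta_form a b k1 p beta ->
  continuity (fun t => Re (beta t)) -> continuity (fun t => Im (beta t)) ->
  Lpotential a b beta Rr (fun r _ => radial_profile k1 a C1 C2 r) (potential a b k1 p C1).
Proof.
  intros Ha Hb Hre Him r t Hr. exists (radial_profile_deriv k1 a C1 r), 0. split; [|split].
  - apply radial_profile_D; lra.
  - apply D_const.
  - unfold potential. rewrite (Bfun_Bphase a b k1 p beta Ha Hb Hre Him t), <- amplitude_eq by lra.
    destruct (Cexp (Bphase a b k1 p t)) as [x y].
    unfold Cadd, Cmul, Cconj, Ci, RtoC, lam, Re, Im; simpl. f_equal; ring.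
Qed.

(** For [C1 <> 0] the potential is a basic solution of character [(2 a k1, k1)]:
    [w = r^(2 a k1) f(t)] with [f = i c B], [c] a nonzero constant. *)
Lemma potential_basic a b k1 p beta C1 : 0 < a -> beta_form a b k1 p beta ->
  continuity (fun t => Re (beta t)) -> continuity (fun t => Im (beta t)) ->
  periodic2pi p -> Rint p 0 (2 * PI) = 0 -> C1 <> 0 ->
  basic_solution_char a b beta (potential a b k1 p C1) (RtoC (2 * a * IZR k1)) k1.
Proof.
  intros Ha Hb Hre Him Hp Hp0 HC.
  assert (Hcp := beta_form_continuous _ _ _ _ _ Ha Hb Hre).
  set (c := if Z.eq_dec k1 0 then C1 else 2 * a * IZR k1 * C1).
  assert (Hc : c <> 0).
  { unfold c; destruct Z.eq_dec; auto.
    apply Rmult_integral_contrapositive; split; auto. apply exponent_nonzero; auto. }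
  set (f := fun t => Cmul (Cmul Ci (RtoC c)) (Cexp (Bphase a b k1 p t))).
  assert (Hw := winding_Bphase a b k1 p beta c Ha Hb Hcp Hp0 Hc). fold f in Hw.
  assert (Hwf : forall r t, 0 < r ->
     potential a b k1 p C1 r t = Cmul (RtoC (Rpower r (Re (RtoC (2 * a * IZR k1))))) (f t)).
  { intros r t Hr. unfold potential, f, c, amplitude, Re, RtoC; cbn [fst snd].
    destruct (Cexp (Bphase a b k1 p t)) as [x y]. destruct Z.eq_dec.
    - subst. replace (2 * a * IZR 0) with 0 by (simpl; ring). rewrite Rpower_O by auto.
      unfold Cmul, Ci, Re, Im; simpl. f_equal; ring.
    - unfold Cmul, Ci, Re, Im; simpl. f_equal; ring. }
  split; [|split].
  - apply (calLsol_separated _ _ _ _ _ _ (amplitude_deriv k1 a C1)); auto.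
    + intros; apply amplitude_D; auto.
    + intros; apply amplitude_ode; auto.
  - exists 1, 0. split; [lra|]. rewrite Hwf by lra. intro E.
    destruct Hw as [_ [Hnz _]]. apply (Hnz 0).
    assert (0 < Rpower 1 (Re (RtoC (2 * a * IZR k1)))) by (unfold Rpower; apply exp_pos).
    revert E. destruct (f 0) as [u v]. unfold Cmul, RtoC, Re, Im in *; simpl in *. intro E.
    injection E; intros E1 E2. f_equal; nra.
  - left. split; [reflexivity|]. exists f. split; [|split]; auto.
    intros t. unfold f. rewrite Bphase_periodic; auto.
Qed.

Lemma CnR_continuity n f : CnR n f -> continuity f.
Proof.
  destruct n as [|n]; simpl; auto. intros [f' [H _]]. apply (continuity_of_deriv _ f'); auto.
Qed.

Theorem proposition10p1 (a b : R) (m : nat) (beta : R -> Cplx) :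
  0 < a -> (2 <= m)%nat -> CnC m beta -> periodic2pi beta ->
  is_integerC (Cmul (Cinv (Cmul (RtoC (2 * PI)) Ci)) (Cint beta 0 (2 * PI))) ->
  (* existence of a nonconstant radial solution *)
  ( (exists Rr : R, 0 < Rr /\ exists f : R -> R,
        radial_sol a b beta Rr f /\
        exists r1 r2, 0 < r1 < Rr /\ 0 < r2 < Rr /\ f r1 <> f r2)
    <->
    (exists (k1 : Z) (p : R -> R), periodic2pi p /\ Rint p 0 (2 * PI) = 0 /\
        forall t, beta t = Csub (Cmul (Cmul (lam a b) (RtoC (/ a))) (RtoC (p t)))
                                (Cmul Ci (RtoC (IZR k1)))) )
  /\
  (* description in this case *)
  (forall (k1 : Z) (p : R -> R), periodic2pi p -> Rint p 0 (2 * PI) = 0 ->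
     (forall t, beta t = Csub (Cmul (Cmul (lam a b) (RtoC (/ a))) (RtoC (p t)))
                              (Cmul Ci (RtoC (IZR k1)))) ->
     let rad := fun (C1 C2 r : R) =>
       if Z.eq_dec k1 0 then C1 * ln r + C2
       else C1 * Rpower r (2 * a * IZR k1) + C2 in
     let Bp := fun t => Cmul (Cexp (0, IZR k1 * t))
                 (Cexp (Cmul (Cmul (Cconj (lam a b)) (RtoC (/ a))) (RtoC (Rint p 0 t)))) in
     let W := fun (C1 r t : R) =>
       if Z.eq_dec k1 0 then Cmul (Cmul Ci (RtoC C1)) (Bp t)
       else Cmul (Cmul Ci (RtoC (2 * a * IZR k1 * C1 * Rpower r (2 * a * IZR k1)))) (Bp t) in
     (forall t, Bfun beta t = Bp t) /\
     (forall (Rr : R) (f : R -> R), 0 < Rr ->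
        radial_sol a b beta Rr f <->
        exists C1 C2 : R, forall r, 0 < r < Rr -> f r = rad C1 C2 r) /\
     (forall C1 C2 : R,
        (forall Rr, 0 < Rr -> Lpotential a b beta Rr (fun r _ => rad C1 C2 r) (W C1)) /\
        (C1 <> 0 ->
           basic_solution_char a b beta (W C1) (RtoC (2 * a * IZR k1)) k1))).
Proof.
  intros Ha _ [Hre Him] Hper Hint.
  apply CnR_continuity in Hre. apply CnR_continuity in Him.
  split; [split|].
  - intros [Rr [_ [f [Hs Hnc]]]].
    apply (beta_form_of_constant_kappa a b beta); auto.
    apply (kappa_constant a b beta Rr f); auto.
  - intros [k1 [p [_ [_ Hb]]]]. exists 1. split; [lra|].
    exists (radial_profile k1 a 1 0). split.
    + apply (radial_profile_sol a b k1 p beta 1 _ 1 0 Ha Hb). auto.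
    + exists (exp (-1)), (exp (-2)).
      assert (exp (-1) < 1 /\ exp (-2) < 1) as [] by (rewrite <- exp_0; split; apply exp_increasing; lra).
      pose proof (exp_pos (-1)). pose proof (exp_pos (-2)).
      split; [lra|]. split; [lra|]. apply radial_profile_nonconstant; auto.
  - intros k1 p Hp Hp0 Hb rad Bp W.
    assert (HBp : forall t, Bp t = Cexp (Bphase a b k1 p t)) by (intros; apply eq_sym, Cexp_add).
    assert (HW : forall C1, W C1 = potential a b k1 p C1).
    { intros C1. unfold W, potential, amplitude.
      do 2 (apply functional_extensionality; intros). rewrite HBp. destruct Z.eq_dec; reflexivity. }
    split; [|split].
    + intros t. rewrite HBp. apply (Bfun_Bphase a b k1 p beta); auto.
    + intros Rr f HR. split.
      * apply (radial_sol_profile a b k1 p beta Rr f); auto.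
      * intros [C1 [C2 HC]]. apply (radial_profile_sol a b k1 p beta Rr f C1 C2); auto.
    + intros C1 C2. rewrite HW. split.
      * intros Rr _. apply potential_Lpotential; auto.
      * intros HC. apply potential_basic; auto.
Qed.
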